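(* Let $R$ be a $p$-adically complete ring, $a\in R$, $M$ a $p$-complete $R$-module and $\{\phi_n\}_{n\ge0}\subset\mathrm{End}_R(M)$ with $\phi_0=\mathrm{id}_M$. Then the following are equivalent: (1) for every $n\ge0$, $\displaystyle \phi_n=\sum_{l,m\ge0}\phi_m\circ\phi_{l+n}\,(1+aX)^{-l-n}(-1)^lX^{[l]}X^{[m]}$; (2) for every $n\ge1$, $\displaystyle \phi_n=\prod_{i=0}^{n-1}(\phi_1-ia)$.
   Context: The identity in (1) is an identity of formal divided-power series in one variable $X$ with coefficients in $\mathrm{End}_R(M)$: one expands $(1+aX)^{-N}=\sum_j\binom{-N}{j}a^jX^j$, uses $X^{[m]}=X^m/m!$, and compares the coefficients of $X^{[k]}$ for each $k\ge0$ (each such coefficient is a finite $\mathbb Z$-linear combination of products of the $\phi$'s and powers of $a$); the left side is the constant series $\phi_n$. *)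

From HB Require Import structures.
From mathcomp Require Import all_boot all_order all_algebra.
Set Implicit Arguments. Unset Strict Implicit. Unset Printing Implicit Defensive.
Import Order.TTheory GRing.Theory Num.Theory.
Local Open Scope ring_scope.

Definition pdivisible (M : zmodType) (p n : nat) (x : M) : Prop :=
  exists y : M, x = y *+ (p ^ n)%N.

(* Classical p-adic completeness: M is p-adically separated and complete,
   i.e. M -> lim_n M / p^n M is an isomorphism. *)
Definition p_complete (M : zmodType) (p : nat) : Prop :=
  (forall x : M, (forall n, pdivisible p n x) -> x = 0) /\
  (forall u : nat -> M, (forall n, pdivisible p n (u n.+1 - u n)) ->
     exists x : M, forall n, pdivisible p n (x - u n)).

(* Coefficient of X^{[j]} in the divided power expansion of (1 + aX)^{-N}:
   j! * binom(-N, j) * a^j = (-1)^j * N(N+1)...(N+j-1) * a^j. *)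
Definition invpow_dpcoef (R : comPzRingType) (a : R) (N j : nat) : R :=
  (-1) ^+ j * (\prod_(i < j) (N + i))%N%:R * a ^+ j.

(* Coefficient of X^{[k]} of the right-hand side of identity (1), applied to x:
   sum over l + m + j = k of the multinomial k!/(l! m! j!) (from
   X^{[l]} X^{[m]} X^{[j]} = (l+m+j)!/(l! m! j!) X^{[l+m+j]}) times
   (-1)^l times the X^{[j]}-coefficient of (1+aX)^{-l-n}, acting on
   phi_m (phi_(l+n) x). *)
Definition rhs1_coef (R : comPzRingType) (M : lmodType R) (a : R)
    (phi : nat -> {linear M -> M}) (n k : nat) (x : M) : M :=
  \sum_(l < k.+1) \sum_(m < (k - l).+1)
     (('C(k, l) * 'C(k - l, m))%N%:R * (-1) ^+ l
        * invpow_dpcoef a (l + n) (k - l - m))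
       *: phi m (phi (l + n)%N x).

Fixpoint falling_end (R : comPzRingType) (M : lmodType R) (f : M -> M) (a : R)
    (n : nat) : M -> M :=
  match n with
  | 0 => id
  | n'.+1 => fun x => let y := falling_end f a n' x in f y - (n'%:R * a) *: y
  end.

From HB Require Import structures.
From mathcomp Require Import all_boot all_order all_algebra.
From mathcomp Require Import ring zify.
Import Order.TTheory GRing.Theory Num.Theory.
Local Open Scope ring_scope.
Set Implicit Arguments. Unset Strict Implicit.

(* Both conditions are equivalent to the recursion
   phi_(n+1) = (phi_1 - n a) o phi_n, given phi_0 = id.  The X^[1]-coefficient
   of (1) is exactly this recursion.  Conversely, differentiating the right
   side of (1) in X shows that, under the recursion, its X^[k+1]-coefficient
   for n is (phi_1 - (k+n) a) applied to its X^[k]-coefficient for n, minus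
   its X^[k]-coefficient for n+1; induction on k then kills every coefficient
   of positive degree.  The identity is coefficientwise. *)

(* [bconv k g] is sum_(i+j=k) C(k,i) g i j, the X^[k]-coefficient of a
   product of two divided power series; [bconvS] is the Leibniz rule. *)
Definition bconv (M : nmodType) (k : nat) (g : nat -> nat -> M) : M :=
  \sum_(i < k.+1) g i (k - i)%N *+ 'C(k, i).

Lemma bconv0 (M : nmodType) (g : nat -> nat -> M) : bconv 0 g = g 0%N 0%N.
Proof. by rewrite /bconv big_ord1. Qed.

Lemma bconvS (M : nmodType) k (g : nat -> nat -> M) :
  bconv k.+1 g = bconv k (fun i j => g i.+1 j + g i j.+1).
Proof.
rewrite /bconv big_ord_recl /=.
under eq_bigr => i _ do rewrite /bump /= add1n subSS binS mulrnDr.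
rewrite big_split /= addrA.
under [in RHS]eq_bigr => i _ do rewrite mulrnDl.
rewrite [in RHS]big_split /= [in RHS]addrC; congr (_ + _).
  rewrite bin0 big_ord_recr /= bin_small // mulr0n addr0 addrC.
  rewrite [in RHS]big_ord_recl /= bin0 !subn0 addrC; congr (_ + _).
  by apply: eq_bigr => i _; rewrite /bump /= add1n subnSK.
Qed.

Lemma eq_bconv (M : nmodType) k (g h : nat -> nat -> M) :
  (forall i j, (i + j)%N = k -> g i j = h i j) -> bconv k g = bconv k h.
Proof.
move=> eq_gh; apply: eq_bigr => i _; rewrite eq_gh //.
by rewrite subnKC // -ltnS ltn_ord.
Qed.

Lemma bconvD (M : nmodType) k (g h : nat -> nat -> M) :
  bconv k (fun i j => g i j + h i j) = bconv k g + bconv k h.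
Proof. by rewrite /bconv -big_split; apply: eq_bigr => i _; rewrite mulrnDl. Qed.

Lemma bconvN (M : zmodType) k (g : nat -> nat -> M) :
  bconv k (fun i j => - g i j) = - bconv k g.
Proof. by rewrite /bconv -sumrN; apply: eq_bigr => i _; rewrite mulNrn. Qed.

Lemma bconvZ (R : pzRingType) (M : lmodType R) k c (g : nat -> nat -> M) :
  bconv k (fun i j => c *: g i j) = c *: bconv k g.
Proof. by rewrite /bconv scaler_sumr; apply: eq_bigr => i _; rewrite scalerMnr. Qed.

Lemma bconv_additive (U V : nmodType) (f : {additive U -> V}) k
    (g : nat -> nat -> U) :
  bconv k (fun i j => f (g i j)) = f (bconv k g).
Proof. by rewrite /bconv raddf_sum; apply: eq_bigr => i _; rewrite raddfMn. Qed.

Lemma bconv_linB (R : pzRingType) (M : lmodType R) (f : {linear M -> M}) k c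
    (g h : nat -> nat -> M) :
  bconv k (fun i j => f (g i j) - c *: g i j - h i j) =
  f (bconv k g) - c *: bconv k g - bconv k h.
Proof. by rewrite !bconvD !bconvN bconvZ bconv_additive. Qed.

Lemma invpow_dpcoef0 (R : comPzRingType) (a : R) N : invpow_dpcoef a N 0 = 1.
Proof. by rewrite /invpow_dpcoef big_ord0 !expr0 !mul1r. Qed.

Lemma invpow_dpcoefS (R : comPzRingType) (a : R) N j :
  invpow_dpcoef a N j.+1 = - ((N + j)%:R * a * invpow_dpcoef a N j).
Proof. by rewrite /invpow_dpcoef big_ord_recr /= natrM !exprS; ring. Qed.

Definition falling_rec (R : comPzRingType) (M : lmodType R) (a : R)
    (phi : nat -> {linear M -> M}) : Prop :=
  forall m x, phi m.+1 x = phi 1%N (phi m x) - (m%:R * a) *: phi m x.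

Section RhsCoefficients.
Variables (R : comPzRingType) (a : R) (M : lmodType R)
  (phi : nat -> {linear M -> M}).

Definition rhs1_term n x l m j : M :=
  ((-1) ^+ l * invpow_dpcoef a (l + n) j) *: phi m (phi (l + n)%N x).

Lemma rhs1_coefE n k x :
  rhs1_coef a phi n k x =
  bconv k (fun l r => bconv r (fun m j => rhs1_term n x l m j)).
Proof.
rewrite /rhs1_coef /bconv; apply: eq_bigr => l _.
rewrite -sumrMnl; apply: eq_bigr => m _.
by rewrite /rhs1_term -mulrnA scalerMnl -mulrA mulr_natl mulnC -subnDA.
Qed.

Lemma rhs1_coef1 (phi0 : forall x, phi 0%N x = x) n x :
  rhs1_coef a phi n 1 x =
  phi 1%N (phi n x) - (n%:R * a) *: phi n x - phi n.+1 x.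
Proof.
rewrite rhs1_coefE bconvS !bconv0 bconvS bconv0 /rhs1_term.
rewrite invpow_dpcoefS !invpow_dpcoef0 !phi0 !expr0 expr1 !mul1r !mulr1.
by rewrite !add0n addn0 add1n scale1r scaleN1r scaleNr addrC.
Qed.

Hypothesis phi_rec : falling_rec a phi.

Lemma rhs1_coefS n k x :
  rhs1_coef a phi n k.+1 x =
  phi 1%N (rhs1_coef a phi n k x) - ((k + n)%:R * a) *: rhs1_coef a phi n k x
  - rhs1_coef a phi n.+1 k x.
Proof.
rewrite !rhs1_coefE bconvS -bconv_linB; apply: eq_bconv => l r lr_k.
rewrite -bconv_linB bconvS -bconvD; apply: eq_bconv => m j mj_r.
rewrite /rhs1_term phi_rec invpow_dpcoefS addSnnS !linearZ /=.
have -> : (k + n = l + n + j + m)%N by lia.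
set v := phi m _; set w := phi m _.
set c0 := invpow_dpcoef _ _ _; set c1 := invpow_dpcoef _ _ _.
rewrite exprS scalerDr !scalerN !scalerA -!scaleNr -[_ + _ *: w + _]addrA.
rewrite -scalerDl [RHS]addrC.
by congr (_ *: _ + (_ + _ *: _)); rewrite ?natrD; ring.
Qed.

Lemma rhs1_coef_rec (phi0 : forall x, phi 0%N x = x) n k x :
  rhs1_coef a phi n k x = if k == 0%N then phi n x else 0.
Proof.
elim: k n => [|k IHk] n.
  by rewrite rhs1_coefE !bconv0 /rhs1_term invpow_dpcoef0 mulr1 scale1r phi0.
rewrite rhs1_coefS !IHk; case: k IHk => [|k] _ /=.
  by rewrite add0n -phi_rec subrr.
by rewrite linear0 scaler0 !subr0.
Qed.

End RhsCoefficients.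

Lemma falling_recP (R : comPzRingType) (a : R) (M : lmodType R)
    (phi : nat -> {linear M -> M}) (phi0 : forall x, phi 0%N x = x) :
  falling_rec a phi <->
  (forall n, (1 <= n)%N -> forall x, phi n x = falling_end (phi 1%N) a n x).
Proof.
split=> [phi_rec n _ x | phi_falling m x].
  by elim: n x => [|n IHn] x; rewrite ?phi0 //= phi_rec IHn.
rewrite (phi_falling m.+1) //=; case: m => [|m]; first by rewrite phi0.
by rewrite -phi_falling.
Qed.

Theorem mainTheorem5 (p : nat) (hp : prime p) (R : comPzRingType)
  (hR : p_complete R p) (a : R) (M : lmodType R) (hM : p_complete M p)
  (phi : nat -> {linear M -> M}) (h0 : forall x : M, phi 0%N x = x) :
  (forall (n k : nat) (x : M),
      rhs1_coef a phi n k x = (if k == 0%N then phi n x else 0)) <->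
  (forall n : nat, (1 <= n)%N -> forall x : M,
      phi n x = falling_end (phi 1%N) a n x).
Proof.
rewrite -falling_recP //; split=> [rhs1 m x | phi_rec n k x].
  by apply/eqP; rewrite eq_sym -subr_eq0 -rhs1_coef1 // rhs1.
exact: rhs1_coef_rec.
Qed.
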